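(* Let $c,K>0$. There is a constant $\bar c=\bar c(c,K)>0$ such that the following holds. Let $N\in\mathbb{N}$, $\varepsilon\ge N^{-1/2}$, let $\{\mathcal{F}_n\}_{n\ge0}$ be a filtration and $B_n$ a sequence of $\mathcal{F}_n$-measurable random variables with $B_0=0$, such that $\Delta_n=B_n-B_{n-1}$ satisfies for all $n\le N$: $$\mathbf{E}(\Delta_n\mid\mathcal{F}_{n-1})\le-\varepsilon\quad\text{and}\quad\mathbf{E}(e^{c|\Delta_n|}\mid\mathcal{F}_{n-1})\le K.$$ Then $$\mathbf{P}(B_N\ge0)\le\begin{cases}e^{-\bar c\sqrt{\varepsilon N}}&\text{if }\varepsilon\ge N^{-1/3},\\ Ne^{-\bar c\varepsilon^2N}&\text{if }\varepsilon<N^{-1/3}.\end{cases}$$ *)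

From HB Require Import structures.
From mathcomp Require Import all_boot all_order all_algebra.
From mathcomp Require Import all_classical all_reals all_analysis.
Set Implicit Arguments. Unset Strict Implicit. Unset Printing Implicit Defensive.
Import Order.TTheory GRing.Theory Num.Theory.
Local Open Scope classical_set_scope.
Local Open Scope ring_scope.

Section Defs.
Context {d : measure_display} {T : measurableType d} {R : realType}.

Definition sub_sigma (G : set (set T)) : Prop :=
  sigma_algebra setT G /\ G `<=` measurable.

Definition filtration (F : nat -> set (set T)) : Prop :=
  (forall n, sub_sigma (F n)) /\ (forall n, F n `<=` F n.+1).

Definition G_measurable (G : set (set T)) (f : T -> R) : Prop :=
  forall U : set R, measurable U -> G (f @^-1` U).

(* Y is a version of the conditional expectation E(X | G) (X integrable) *)
Definition cond_exp_version (P : probability T R) (G : set (set T))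
  (X Y : T -> R) : Prop :=
  [/\ P.-integrable setT (EFin \o X), G_measurable G Y,
      P.-integrable setT (EFin \o Y) &
      forall A, G A ->
        (\int[P]_(x in A) (Y x)%:E = \int[P]_(x in A) (X x)%:E)%E].

Definition cond_exp_le (P : probability T R) (G : set (set T))
  (X : T -> R) (b : R) : Prop :=
  exists Y, cond_exp_version P G X Y /\ {ae P, forall x, Y x <= b}.

End Defs.

(* Chernoff's method.  By [e^y <= 1 + y + y^2 e^|y|] and [x^2 <= (16/c^2) e^(c|x|/2)],
   for [0 <= l <= c/2] the conditional hypotheses give
     E(e^(l D_n) | F_(n-1)) <= 1 - l eps + (16/c^2) l^2 K <= e^(-l eps/2)
   as soon as [l <= c^2 eps / (32 K)].  Iterating, [E e^(l B_N) <= e^(-l eps N/2)], which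
   bounds [P(B_N >= 0)].  With [l = min(c/2, c^2 eps/(32 K))] the exponent is at least
   [cbar min(eps N, eps^2 N)], and this dominates both branches of the claimed bound.
   Conditional expectations are only available through versions, so the one-step estimate
   is proved against the bounded F_(n-1)-measurable weights [min(e^(l B_(n-1)), m)], which
   are uniform limits of F_(n-1)-simple staircase functions, and then [m -> oo] by monotone
   convergence. *)

From HB Require Import structures.
From mathcomp Require Import all_boot all_order all_algebra.
From mathcomp Require Import all_classical all_reals all_analysis.
From mathcomp Require Import measurable_realfun.
From mathcomp Require Import ring lra.
Import Order.TTheory GRing.Theory Num.Theory.
Local Open Scope classical_set_scope.
Local Open Scope ring_scope.

Section RealInequalities.
Variable R : realType.
Implicit Types c l x : R.

(* [expR y - 1 - y <= y (expR y - 1) <= y^2 expR |y|] *)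
Lemma expR_le_1Dx_sqr (y : R) : expR y <= 1 + y + y ^+ 2 * expR `|y|.
Proof.
have ey_gt0 := expR_gt0 y.
have expR_sub1_le : expR y - 1 <= y * expR y.
  have : expR y * (1 - y) <= expR y * expR (- y) by rewrite ler_pM2l ?expR_ge1Dx.
  by rewrite -expRD subrr expR0; lra.
have := expR_ge1Dx y.
have [y_ge0|y_lt0] := lerP 0 y; first by rewrite ger0_norm //; nra.
rewrite ltr0_norm //; have := expR_ge1Dx (- y); nra.
Qed.

Lemma expR_mul_le_quadratic c l x : 0 < c -> 0 <= l -> l <= c / 2 ->
  expR (l * x) <= 1 + l * x + 16 / c ^+ 2 * l ^+ 2 * expR (c * `|x|).
Proof.
move=> c_gt0 l_ge0 l_le.
apply: (le_trans (expR_le_1Dx_sqr (l * x))); rewrite lerD2l.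
set E := expR (c * `|x| / 2).
have EE : expR (c * `|x|) = E * E by rewrite -expRD; congr expR; field.
have x_ge0 := normr_ge0 x.
have lx_le : expR `|l * x| <= E by rewrite ler_expR normrM ger0_norm //; nra.
(* [1 + t <= expR t] at [t = c |x| / 4], squared *)
have sqr_le : x ^+ 2 <= 16 * E / c ^+ 2.
  have c2_gt0 : 0 < c ^+ 2 by rewrite exprn_gt0.
  rewrite ler_pdivlMr // -[x ^+ 2]ger0_norm ?sqr_ge0 // normrX.
  have -> : E = expR (c * `|x| / 4) ^+ 2 by rewrite expr2 -expRD; congr expR; field.
  have := expR_ge1Dx (c * `|x| / 4); set u := c * `|x| / 4; set v := expR u.
  have u_ge0 : 0 <= u by rewrite /u; apply: divr_ge0 => //; nra.
  have -> : `|x| ^+ 2 * c ^+ 2 = 16 * u ^+ 2 by rewrite /u; field.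
  nra.
have -> : 16 / c ^+ 2 * l ^+ 2 * expR (c * `|x|) = l ^+ 2 * (16 * E / c ^+ 2 * E).
  by rewrite EE; ring.
rewrite exprMn -[leLHS]mulrA; apply: ler_wpM2l; first exact: sqr_ge0.
by apply: ler_pM; rewrite ?sqr_ge0 ?expR_ge0.
Qed.

Lemma powR_Nrecip_le (x y : R) (n : nat) : (0 < n)%N -> 0 <= x -> 0 <= y ->
  (x `^ (- (1 / n%:R)) <= y) = (x^-1 <= y ^+ n).
Proof.
move=> n_gt0 x_ge0 y_ge0.
have -> : x^-1 = (x `^ (- (1 / n%:R))) ^+ n.
  rewrite -powR_mulrn ?powR_ge0 // -powRrM -powR_inv1 //; congr powR.
  by field; rewrite pnatr_eq0 -lt0n.
by rewrite ler_pXn2r // ?nnegrE ?powR_ge0 // -lt0n.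
Qed.

Lemma staircase_approx (de z : R) (n : nat) : 0 < de -> 0 <= z <= n%:R * de ->
  `|z - \sum_(j < n) de * \1_[set r | j.+1%:R * de <= r] z| <= de.
Proof.
move=> de_gt0 /andP[z_ge0 z_le].
pose s k := \sum_(j < k) de * \1_[set r | j.+1%:R * de <= r] z.
suff [s_le_z s_le_n s_ge] :
    [/\ s n <= z, s n <= n%:R * de & z - de <= s n \/ n%:R * de <= s n].
  by rewrite -/(s n) ler_norml; case: s_ge => ?; apply/andP; split; lra.
elim: n {z_le} => [|n [IHz IHn IHge]].
  by rewrite /s big_ord0 mul0r; split => //; right.
rewrite /s big_ord_recr -/(s n) /= -natr1 mulrDl mul1r indicE.
have [le_z|lt_z] := leP (n%:R * de + de) z.
  rewrite mem_set // mulr1; split; [lra | lra | by case: IHge => ?; [left | right]; lra].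
rewrite memNset /=; last by apply/negP; rewrite -ltNge.
by rewrite mulr0 addr0; split; [lra | lra | left; case: IHge => ?; lra].
Qed.

Lemma expR_rate_le (c a cbar eps N : R) :
  0 < cbar -> cbar <= c / 4 -> cbar <= a -> 0 < eps -> 1 <= N -> N^-1 <= eps ^+ 2 ->
  expR (- (Num.min (c / 2) (2 * a * eps) * eps / 2) * N) <=
  (if N^-1 <= eps ^+ 3 then expR (- cbar * Num.sqrt (eps * N))
   else N * expR (- cbar * (eps ^+ 2 * N))).
Proof.
move=> cbar_gt0 cbar_le_c cbar_le_a eps_gt0 N_ge1 eps2_ge.
have N_gt0 : 0 < N by lra.
have eps2N_ge1 : 1 <= eps ^+ 2 * N by rewrite -ler_pdivrMr // mul1r.
have epsN_ge1 : 1 <= eps * N by have [|] := lerP 1 eps; nra.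
set m := Num.min (eps * N) (eps ^+ 2 * N).
have m_le_epsN : m <= eps * N by rewrite /m ge_min lexx.
have m_le_eps2N : m <= eps ^+ 2 * N by rewrite /m ge_min lexx orbT.
have rate : cbar * m <= Num.min (c / 2) (2 * a * eps) * eps / 2 * N.
  by have [?|?] := leP (c / 2) (2 * a * eps); nra.
case: ifP => [eps3_ge | /negbT eps3_lt].
  have eps3N_ge1 : 1 <= eps ^+ 3 * N by rewrite -ler_pdivrMr // mul1r.
  have sqrt_le : Num.sqrt (eps * N) <= m.
    have s_ge0 := sqrtr_ge0 (eps * N); set s := Num.sqrt _ in s_ge0 *.
    have s2 : s ^+ 2 = eps * N by rewrite sqr_sqrtr // ltW // mulr_gt0.
    by rewrite le_min; apply/andP; split; nra.
  by rewrite ler_expR; nra.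
have eps_lt1 : eps < 1.
  have Ninv_le1 : N^-1 <= 1 by rewrite invf_le1.
  rewrite ltNge; apply/negP => eps_ge1; have := exprn_ege1 3 eps_ge1.
  by move: eps3_lt; rewrite -ltNge; lra.
have m_eq : m = eps ^+ 2 * N by rewrite /m min_r //; nra.
apply: (@le_trans _ _ (expR (- cbar * (eps ^+ 2 * N)))); first by rewrite ler_expR -m_eq; nra.
by rewrite ler_peMl // expR_ge0.
Qed.

End RealInequalities.

Section SubSigmaMeasurability.
Context {d : measure_display} {T : measurableType d} {R : realType}.
Context {G : set (set T)}.
Implicit Type f : T -> R.

Lemma G_measurable_comp f (h : R -> R) :
  G_measurable G f -> measurable_fun setT h -> G_measurable G (h \o f).
Proof.
move=> Gf mh U mU; rewrite comp_preimage; apply: Gf.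
by rewrite -[_ @^-1` _]setTI; exact: mh.
Qed.

Lemma G_measurable_measurable_fun {f} :
  sub_sigma G -> G_measurable G f -> measurable_fun setT f.
Proof. by move=> [_ sub] Gf _ U mU; rewrite setTI; exact/sub/Gf. Qed.

Lemma G_measurable_ge f (a : R) : G_measurable G f -> G [set x | a <= f x].
Proof.
by move=> Gf; rewrite -preimage_itvcy; apply: Gf; exact: measurable_itv.
Qed.

End SubSigmaMeasurability.

Section BoundedIntegrability.
Context {d : measure_display} {T : measurableType d} {R : realType}.
Variable mu : {finite_measure set T -> \bar R}.
Implicit Types f g : T -> R.

Lemma integrable_bounded f (M : R) : measurable_fun setT f ->
  (forall x, `|f x| <= M) -> mu.-integrable setT (EFin \o f).
Proof.
move=> mf f_le.
apply: (le_integrable measurableT _ _ (finite_measure_integrable_cst mu M measurableT)).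
  exact/measurable_EFinP.
by move=> x _ /=; rewrite lee_fin (le_trans (f_le x)) ?ler_norm.
Qed.

Lemma integrable_bounded_mul g f (M : R) : measurable_fun setT g ->
  (forall x, `|g x| <= M) -> mu.-integrable setT (EFin \o f) ->
  mu.-integrable setT (EFin \o (fun x => g x * f x)).
Proof.
move=> mg g_le if_; have /integrableP[/measurable_EFinP mf _] := if_.
apply: (le_integrable measurableT _ _ (integrableZl measurableT M (integrable_abse if_))).
  exact/measurable_EFinP/measurable_funM.
move=> x _ /=; rewrite lee_fin normrM [`|M * _|]normrM normr_id.
by rewrite ler_wpM2r // (le_trans (g_le x)) ?ler_norm.
Qed.

Lemma integrable_indic_sum_mul (w : nat -> R) (A : nat -> set T) n f :
  (forall j, measurable (A j)) -> mu.-integrable setT (EFin \o f) ->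
  mu.-integrable setT (EFin \o (fun x => (\sum_(j < n) w j * \1_(A j) x) * f x)).
Proof.
move=> mA if_; apply: (integrable_bounded_mul _ _ (\sum_(j < n) `|w j|) _ _ if_).
  by apply: measurable_sum => j; apply: measurable_funM => //; exact: measurable_indic.
move=> x; apply: (le_trans (ler_norm_sum _ _ _)); apply: ler_sum => j _.
by rewrite normrM ler_piMr // indicE; case: (_ \in _); rewrite ?normr1 ?normr0.
Qed.

End BoundedIntegrability.

Section ConditionalExpectationVersions.
Context {d : measure_display} {T : measurableType d} {R : realType}.
Context {P : probability T R} {G : set (set T)}.
Hypothesis subG : sub_sigma G.
Implicit Types X Y Z : T -> R.

Lemma cond_exp_le_version_le {X} {b : R} : cond_exp_le P G X b ->
  exists Y, cond_exp_version P G X Y /\ forall x, Y x <= b.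
Proof.
move=> [Y0 [[iX GY0 iY0 Y0_int] Y0_le]].
have mY0 := G_measurable_measurable_fun subG GY0.
pose h := id \min cst b : R -> R.
have mh : measurable_fun setT h := measurable_minr (@measurable_id _ _ _) (measurable_cst b).
have mhY0 : measurable_fun setT (h \o Y0) := measurableT_comp mh mY0.
exists (h \o Y0); split; last by move=> x; rewrite /h /= ge_min lexx orbT.
split => //; first exact: G_measurable_comp.
- apply: (le_integrable measurableT _ _ (integrableD measurableT (integrable_abse iY0)
    (finite_measure_integrable_cst P `|b| measurableT))); first exact/measurable_EFinP.
  move=> x _ /=; rewrite lee_fin [leRHS]ger0_norm ?addr_ge0 // /h /=.
  by have [|] := leP (Y0 x) b; rewrite ?lerDl ?lerDr.
- move=> A GA; rewrite -Y0_int //; apply: ae_eq_integral => //.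
  + exact: subG.2.
  + exact/measurable_EFinP/measurable_funS/mhY0.
  + exact/measurable_EFinP/measurable_funS/mY0.
  + by apply: filterS Y0_le => x Y0x_le _ /=; rewrite /h /= min_l.
Qed.

Lemma version_Rintegral_indic {X Y} {A : set T} :
  cond_exp_version P G X Y -> G A ->
  \int[P]_x (\1_A x * X x) = \int[P]_x (\1_A x * Y x).
Proof.
move=> [_ _ _ XY_int] GA.
have indicM f : \int[P]_x (\1_A x * f x) = \int[P]_(x in A) f x.
  rewrite [RHS]Rintegral_mkcond; apply: eq_Rintegral => x _.
  by rewrite patchE indicE; case: (x \in A); rewrite ?mul1r ?mul0r.
by rewrite !indicM /Rintegral XY_int.
Qed.

Lemma version_Rintegral_simple {X Y} (w : nat -> R) (A : nat -> set T) n :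
  cond_exp_version P G X Y -> (forall j, G (A j)) ->
  \int[P]_x ((\sum_(j < n) w j * \1_(A j) x) * X x) =
  \int[P]_x ((\sum_(j < n) w j * \1_(A j) x) * Y x).
Proof.
move=> V GA; have [iX _ iY _] := V.
have mA j : measurable (A j) := subG.2 _ (GA j).
have int_indicM j f : P.-integrable setT (EFin \o f) ->
    P.-integrable setT (EFin \o (fun x => \1_(A j) x * f x)).
  move=> if_; apply: (integrable_bounded_mul P _ _ 1) => // x.
  by rewrite indicE; case: (_ \in _); rewrite ?normr1 ?normr0.
elim: n => [|n IH]; first by under eq_Rintegral do rewrite big_ord0 mul0r;
  under [RHS]eq_Rintegral do rewrite big_ord0 mul0r.
have split_last f : P.-integrable setT (EFin \o f) ->
    \int[P]_x ((\sum_(j < n.+1) w j * \1_(A j) x) * f x) =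
    \int[P]_x ((\sum_(j < n) w j * \1_(A j) x) * f x) + w n * \int[P]_x (\1_(A n) x * f x).
  move=> if_; under eq_Rintegral do rewrite big_ord_recr /= mulrDl -mulrA.
  rewrite RintegralD ?RintegralZl //; first exact: int_indicM.
    exact: (integrable_indic_sum_mul P w A n f mA if_).
  exact: (integrableZl measurableT (w n) (int_indicM n f if_)).
by rewrite !split_last // IH (version_Rintegral_indic V (GA n)).
Qed.

(* [Z] is uniformly approximated by the [G]-simple staircase functions *)
Lemma version_Rintegral_mul {X Y Z} {m : R} :
  cond_exp_version P G X Y -> G_measurable G Z -> (forall x, 0 <= Z x <= m) ->
  \int[P]_x (Z x * X x) = \int[P]_x (Z x * Y x).
Proof.
move=> V GZ Z_bnd; have [iX _ iY _] := V.
have mZ := G_measurable_measurable_fun subG GZ.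
set M := \int[P]_x `|X x| + \int[P]_x `|Y x|.
have M_ge0 : 0 <= M by rewrite addr_ge0 // Rintegral_ge0.
suff err_le de : 0 < de ->
    `|\int[P]_x (Z x * X x) - \int[P]_x (Z x * Y x)| <= de * M.
  apply/eqP; rewrite -subr_eq0 -normr_le0; apply/ler_addgt0Pr => e e_gt0.
  rewrite add0r; apply: (le_trans (err_le (e / (M + 1)) _)).
    by rewrite divr_gt0 ?ltr_wpDl.
  by rewrite mulrAC ler_pdivrMr ?ltr_wpDl // ler_pM2l //; lra.
move=> de_gt0.
pose n := (Num.truncn (m / de)).+1.
pose A j := Z @^-1` [set r | j.+1%:R * de <= r].
pose S x := \sum_(j < n) de * \1_(A j) x.
have GA j : G (A j) by exact: G_measurable_ge.
have mA j : measurable (A j) := subG.2 _ (GA j).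
have SXY : \int[P]_x (S x * X x) = \int[P]_x (S x * Y x).
  exact: (version_Rintegral_simple (fun=> de) A n V GA).
have ZS_le x : `|Z x - S x| <= de.
  have /andP[Zx_ge0 Zx_le] := Z_bnd x; apply: staircase_approx => //.
  rewrite Zx_ge0 (le_trans Zx_le) // -ler_pdivrMr //; exact/ltW/truncnS_gt.
have err W : P.-integrable setT (EFin \o W) ->
    `|\int[P]_x (Z x * W x) - \int[P]_x (S x * W x)| <= de * \int[P]_x `|W x|.
  move=> iW; have iZW : P.-integrable setT (EFin \o (fun x => Z x * W x)).
    apply: (integrable_bounded_mul P _ _ m) => // x.
    by have /andP[Zx_ge0 Zx_le] := Z_bnd x; rewrite ger0_norm.
  have iSW := integrable_indic_sum_mul P (fun=> de) A n W mA iW.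
  have iZSW := integrableB measurableT iZW iSW.
  rewrite -RintegralB // -RintegralZl //; last exact: integrable_norm.
  apply: (le_trans (le_normr_Rintegral _ iZSW)) => //.
  apply: le_Rintegral => //; first exact: integrable_norm.
    exact: (integrableZl measurableT de (integrable_norm iW)).
  by move=> x _; rewrite -mulrBl normrM ler_wpM2r.
have -> : \int[P]_x (Z x * X x) - \int[P]_x (Z x * Y x) =
    (\int[P]_x (Z x * X x) - \int[P]_x (S x * X x)) -
    (\int[P]_x (Z x * Y x) - \int[P]_x (S x * Y x)).
  by rewrite SXY; ring.
by rewrite mulrDr; apply: (le_trans (ler_normB _ _)); apply: lerD; apply: err.
Qed.

Lemma cond_exp_le_Rintegral_mul {X Z} {b m : R} :
  cond_exp_le P G X b -> G_measurable G Z -> (forall x, 0 <= Z x <= m) ->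
  \int[P]_x (Z x * X x) <= b * \int[P]_x Z x.
Proof.
move=> /cond_exp_le_version_le[Y [V Y_le]] GZ Z_bnd; have [_ _ iY _] := V.
have mZ := G_measurable_measurable_fun subG GZ.
have Z_le x : `|Z x| <= m by have /andP[Zx_ge0 Zx_le] := Z_bnd x; rewrite ger0_norm.
have iZ := integrable_bounded P _ m mZ Z_le.
rewrite (version_Rintegral_mul V GZ Z_bnd) -RintegralZl //.
apply: le_Rintegral => //; first exact: (integrable_bounded_mul P _ _ m).
  exact: (integrableZl measurableT b iZ).
move=> x _; rewrite [b * _]mulrC ler_wpM2l //.
by have /andP[] := Z_bnd x.
Qed.

End ConditionalExpectationVersions.

Section NonnegIntegrals.
Context {d : measure_display} {T : measurableType d} {R : realType}.

Lemma ge0_integral_mul_le_truncations (mu : {measure set T -> \bar R}) (f g : T -> R) (Q : R) :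
  measurable_fun setT f -> measurable_fun setT g ->
  (forall x, 0 <= f x) -> (forall x, 0 <= g x) -> 0 <= Q ->
  (forall m : nat, (\int[mu]_x (Num.min (f x) m%:R * g x)%:E <=
                    Q%:E * \int[mu]_x (Num.min (f x) m%:R)%:E)%E) ->
  (\int[mu]_x (f x * g x)%:E <= Q%:E * \int[mu]_x (f x)%:E)%E.
Proof.
move=> mf mg f_ge0 g_ge0 Q_ge0 trunc_le.
pose fm (m : nat) x := Num.min (f x) m%:R.
have mfm m : measurable_fun setT (fm m) by exact: measurable_minr.
have fm_ge0 m x : 0 <= fm m x by rewrite le_min f_ge0 ler0n.
have fm_le m x : fm m x <= f x by rewrite ge_min lexx.
have fm_nd x : nondecreasing_seq (fm ^~ x).
  by move=> m m' mm'; rewrite le_min !ge_min lexx ler_nat mm' orbT.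
have fmg_ge0 m x : (0 <= (fm m x * g x)%:E)%E by rewrite lee_fin mulr_ge0.
have mfmg m : measurable_fun setT (fun x => (fm m x * g x)%:E).
  exact/measurable_EFinP/measurable_funM.
have fmg_nd x : nondecreasing_seq (fun m => (fm m x * g x)%:E).
  by move=> m m' mm'; rewrite lee_fin ler_wpM2r ?fm_nd.
have -> : (fun x => (f x * g x)%:E) = fun x => limn (fun m => (fm m x * g x)%:E).
  apply/funext => x; apply/esym; apply: lim_near_cst => //.
  exists (Num.truncn (f x)).+1 => // m /= m_ge.
  by rewrite /fm min_l // (le_trans (ltW (truncnS_gt _))) // ler_nat.
rewrite (@monotone_convergence _ _ _ mu _ measurableT (fun m x => (fm m x * g x)%:E)) //.
apply: lime_le.
  apply: ereal_nondecreasing_is_cvgn => m m' mm'.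
  by apply: ge0_le_integral => // x _; exact: fmg_nd.
apply: nearW => m; apply: (le_trans (trunc_le m)); rewrite lee_wpmul2l ?lee_fin //.
apply: ge0_le_integral => //.
- by move=> x _; rewrite lee_fin; exact: fm_ge0.
- exact/measurable_EFinP/mfm.
- exact/measurable_EFinP.
- by move=> x _; rewrite lee_fin; exact: fm_le.
Qed.

Lemma measure_ge0_le_integral_expR (mu : {measure set T -> \bar R}) (f : T -> R) (l : R) :
  measurable_fun setT f -> 0 <= l ->
  (mu [set x | (0 <= f x)%R] <= \int[mu]_x (expR (l * f x))%:E)%E.
Proof.
move=> mf l_ge0.
have mA : measurable [set x | 0 <= f x].
  by rewrite -preimage_itvcy -[_ @^-1` _]setTI; apply: mf => //; exact: measurable_itv.
rewrite -[X in mu X]setIT -integral_indic //; apply: ge0_le_integral => //.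
- exact/measurable_EFinP/measurable_indic.
- apply/measurable_EFinP; apply: measurableT_comp => //.
  exact: measurable_funM.
move=> x _; rewrite lee_fin indicE.
have [fx_ge0|fx_lt0] := boolP (x \in [set x | 0 <= f x]); last by rewrite expR_ge0.
rewrite (le_trans _ (expR_ge1Dx _)) // lerDl mulr_ge0 //.
by move: fx_ge0; rewrite inE.
Qed.

End NonnegIntegrals.

Section ExponentialMoments.
Context {d : measure_display} {T : measurableType d} {R : realType}.
Variable P : probability T R.

Lemma expR_increment_truncated_le {G : set (set T)} {Z D : T -> R} {c K eps l m : R} :
  sub_sigma G -> G_measurable G Z -> (forall x, 0 <= Z x <= m) ->
  cond_exp_le P G D (- eps) -> cond_exp_le P G (fun x => expR (c * `|D x|)) K ->
  0 < c -> 0 <= l -> l <= c / 2 ->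
  (\int[P]_x (Z x * expR (l * D x))%:E <=
   ((1 - l * eps + 16 / c ^+ 2 * l ^+ 2 * K) * \int[P]_x Z x)%:E)%E.
Proof.
move=> subG GZ Z_bnd D_le W_le c_gt0 l_ge0 l_le.
have [_ [[iD _ _ _] _]] := D_le; have [_ [[iW _ _ _] _]] := W_le.
have mD : measurable_fun setT D by apply/measurable_EFinP; case/integrableP: iD.
set W := fun x => expR (c * `|D x|) in iW W_le.
set Dc := 16 / c ^+ 2.
have mZ := G_measurable_measurable_fun subG GZ.
have Z_ge0 x : 0 <= Z x by case/andP: (Z_bnd x).
have Z_le x : `|Z x| <= m by have /andP[_ Zx_le] := Z_bnd x; rewrite ger0_norm.
have iZ := integrable_bounded P _ m mZ Z_le.
have iZD := integrable_bounded_mul P _ _ m mZ Z_le iD.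
have iZW := integrable_bounded_mul P _ _ m mZ Z_le iW.
have iZDW : P.-integrable setT
    (EFin \o (fun x => l * (Z x * D x) + Dc * l ^+ 2 * (Z x * W x))).
  exact: (integrableD measurableT (integrableZl measurableT l iZD)
                                  (integrableZl measurableT (Dc * l ^+ 2) iZW)).
pose F x := Z x + (l * (Z x * D x) + Dc * l ^+ 2 * (Z x * W x)).
have iF : P.-integrable setT (EFin \o F) by exact: (integrableD measurableT iZ iZDW).
apply: (@le_trans _ _ (\int[P]_x (F x)%:E)%E).
  apply: ge0_le_integral => //.
  - by move=> x _; rewrite lee_fin mulr_ge0 ?expR_ge0.
  - apply/measurable_EFinP/measurable_funM => //.
    by apply: measurableT_comp => //; exact: measurable_funM.
  - by case/integrableP: iF.
  move=> x _; rewrite lee_fin.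
  have -> : F x = Z x * (1 + l * D x + Dc * l ^+ 2 * W x) by rewrite /F; ring.
  by rewrite ler_wpM2l ?expR_mul_le_quadratic.
rewrite -[X in (X <= _)%E]fineK ?integrable_fin_num // lee_fin -/(Rintegral _ _ _).
rewrite /F RintegralD // RintegralD ?RintegralZl //; last 2 first.
- exact: (integrableZl measurableT l iZD).
- exact: (integrableZl measurableT (Dc * l ^+ 2) iZW).
have ZD_le := cond_exp_le_Rintegral_mul subG D_le GZ Z_bnd.
have ZW_le := cond_exp_le_Rintegral_mul subG W_le GZ Z_bnd.
have Z_int_ge0 : 0 <= \int[P]_x Z x by exact: Rintegral_ge0.
have Dcl2_ge0 : 0 <= Dc * l ^+ 2 by rewrite mulr_ge0 ?sqr_ge0 // divr_ge0 ?sqr_ge0.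
have := ler_wpM2l l_ge0 ZD_le; have := ler_wpM2l Dcl2_ge0 ZW_le; nra.
Qed.

Lemma expR_increment_le {G : set (set T)} {Bp Bn : T -> R} {c K eps l Q : R} :
  sub_sigma G -> G_measurable G Bp ->
  cond_exp_le P G (fun x => Bn x - Bp x) (- eps) ->
  cond_exp_le P G (fun x => expR (c * `|Bn x - Bp x|)) K ->
  0 < c -> 0 <= l -> l <= c / 2 ->
  1 - l * eps + 16 / c ^+ 2 * l ^+ 2 * K <= Q -> 0 <= Q ->
  (\int[P]_x (expR (l * Bn x))%:E <= Q%:E * \int[P]_x (expR (l * Bp x))%:E)%E.
Proof.
move=> subG GBp D_le W_le c_gt0 l_ge0 l_le q_le Q_ge0.
set D := fun x => Bn x - Bp x in D_le W_le.
have [_ [[iD _ _ _] _]] := D_le.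
have mD : measurable_fun setT D by apply/measurable_EFinP; case/integrableP: iD.
have mexpl (f : T -> R) :
    measurable_fun setT f -> measurable_fun setT (fun x => expR (l * f x)).
  by move=> mf; apply: measurableT_comp => //; exact: measurable_funM.
have -> : (fun x => (expR (l * Bn x))%:E) = fun x => (expR (l * Bp x) * expR (l * D x))%:E.
  by apply/funext => x; rewrite -expRD /D; congr (EFin (expR _)); ring.
apply: ge0_integral_mul_le_truncations => //.
- exact/mexpl/(G_measurable_measurable_fun subG).
- exact: mexpl.
move=> m; pose Z x := Num.min (expR (l * Bp x)) m%:R.
have GZ : G_measurable G Z.
  apply: (G_measurable_comp _ (fun r => Num.min (expR (l * r)) m%:R)) => //.
  by apply: measurable_minr => //; apply: measurableT_comp => //; apply: measurable_funM.
have Z_bnd x : 0 <= Z x <= m%:R by rewrite le_min expR_ge0 ler0n ge_min lexx orbT.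
apply: (le_trans (expR_increment_truncated_le subG GZ Z_bnd D_le W_le c_gt0 l_ge0 l_le)).
have Z_le x : `|Z x| <= m%:R by have /andP[Zx_ge0 Zx_le] := Z_bnd x; rewrite ger0_norm.
have iZ := integrable_bounded P _ _ (G_measurable_measurable_fun subG GZ) Z_le.
rewrite -[X in (_ <= _ * X)%E]fineK ?integrable_fin_num // lee_fin ler_wpM2r //.
by apply: Rintegral_ge0 => x _; case/andP: (Z_bnd x).
Qed.

Lemma filtration_expR_moment_le {F : nat -> set (set T)} {B : nat -> T -> R}
    {c K eps l Q : R} {N : nat} :
  (forall n, sub_sigma (F n)) -> (forall n, G_measurable (F n) (B n)) ->
  B 0%N = (fun _ => 0) ->
  (forall n, (1 <= n <= N)%N ->
     cond_exp_le P (F n.-1) (fun x => B n x - B n.-1 x) (- eps) /\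
     cond_exp_le P (F n.-1) (fun x => expR (c * `|B n x - B n.-1 x|)) K) ->
  0 < c -> 0 <= l -> l <= c / 2 ->
  1 - l * eps + 16 / c ^+ 2 * l ^+ 2 * K <= Q -> 0 <= Q ->
  (\int[P]_x (expR (l * B N x))%:E <= (Q ^+ N)%:E)%E.
Proof.
move=> subF GB B0 incr c_gt0 l_ge0 l_le q_le Q_ge0.
have moment_le n : (n <= N)%N -> (\int[P]_x (expR (l * B n x))%:E <= (Q ^+ n)%:E)%E;
  last exact: moment_le.
elim: n => [_|n IH n_lt].
  rewrite B0; under eq_integral do rewrite mulr0 expR0.
  have P1 : P setT = 1%E := probability_setT P.
  by rewrite integral_cst //; change (1 * P setT <= 1%:E)%E; rewrite P1 mule1.
have [D_le W_le] := incr n.+1 n_lt.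
apply: (le_trans (expR_increment_le (subF n) (GB n) D_le W_le c_gt0 l_ge0 l_le q_le Q_ge0)).
by rewrite exprS EFinM lee_wpmul2l ?lee_fin // IH // ltnW.
Qed.

End ExponentialMoments.

Theorem propositionA1 (R : realType) (c K : R) :
  0 < c -> 0 < K ->
  exists cbar : R, 0 < cbar /\
  forall (N : nat) (eps : R) (d : measure_display) (T : measurableType d)
    (P : probability T R) (F : nat -> set (set T)) (B : nat -> T -> R),
  (0 < N)%N ->
  (N%:R) `^ (- (1 / 2)) <= eps ->
  filtration F ->
  (forall n, G_measurable (F n) (B n)) ->
  B 0%N = (fun _ => 0) ->
  (forall n, (1 <= n <= N)%N ->
     cond_exp_le P (F n.-1) (fun x => B n x - B n.-1 x) (- eps) /\
     cond_exp_le P (F n.-1) (fun x => expR (c * `|B n x - B n.-1 x|)) K) ->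
  (P [set x | (0 <= B N x)%R] <=
     (if (N%:R) `^ (- (1 / 3)) <= eps
      then expR (- cbar * Num.sqrt (eps * N%:R))
      else N%:R * expR (- cbar * (eps ^+ 2 * N%:R)))%R%:E)%E.
Proof.
move=> c_gt0 K_gt0.
(* for [l <= 2 a eps] the quadratic term [(16/c^2) l^2 K] is at most [l eps / 2] *)
pose a := c ^+ 2 / (64 * K).
have a_gt0 : 0 < a by rewrite divr_gt0 ?exprn_gt0 ?mulr_gt0.
exists (Num.min (c / 4) a); split; first by rewrite lt_min a_gt0 divr_gt0.
move=> N eps d T P F B N_gt0 eps_ge [subF _] GB B0 incr.
have N_ge1 : 1 <= (N%:R : R) by rewrite ler1n.
have eps_gt0 : 0 < eps by apply: lt_le_trans eps_ge; rewrite powR_gt0 // ltr0n.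
set l := Num.min (c / 2) (2 * a * eps).
have l_ge0 : 0 <= l by rewrite le_min; apply/andP; split; nra.
have l_le : l <= c / 2 by rewrite ge_min lexx.
have q_le : 1 - l * eps + 16 / c ^+ 2 * l ^+ 2 * K <= expR (- (l * eps / 2)).
  have l_le_a : l <= 2 * a * eps by rewrite ge_min lexx orbT.
  have aK : 16 / c ^+ 2 * K * (2 * a) = 1 / 2 by rewrite /a; field; rewrite ?gt_eqF ?exprn_gt0.
  apply: le_trans (expR_ge1Dx _); nra.
have mgf := filtration_expR_moment_le P subF GB B0 incr c_gt0 l_ge0 l_le q_le (expR_ge0 _).
have mBN := G_measurable_measurable_fun (subF N) (GB N).
apply: (le_trans (measure_ge0_le_integral_expR P _ _ mBN l_ge0)); apply: (le_trans mgf).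
rewrite lee_fin -expRM_natr.
have [N_ge0 eps_ge0] : 0 <= (N%:R : R) /\ 0 <= eps by split; [exact: ler0n | exact: ltW].
rewrite !powR_Nrecip_le // in eps_ge *.
by apply: expR_rate_le; rewrite ?ge_min ?lexx ?orbT ?lt_min ?a_gt0 ?divr_gt0.
Qed.
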